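(* Fix $t\in(0,\infty)$. For $0\le\beta\le1$ let $\varphi_\beta$ be the function equal to $1$ on $B(0;\frac{1-\beta}2)$, equal to $\frac12$ on $B(0;\frac{1+\beta}2)\setminus B(0;\frac{1-\beta}2)$, and $0$ elsewhere, and let $\mu(\beta):=\xi(\varphi_\beta,t)$. Then $$\max_{0\le\beta\le1}\mu(\beta)=\max\{\mu(0),\mu(1)\}.$$
   Context: $\|\cdot\|$ is a norm on $\mathbb R^d$, $B(x;\rho)=\{y:\|x-y\|<\rho\}$ (with $B(0;0)=\emptyset$). $H(x)=x\ln x-x+1$. For nonnegative bounded measurable $\varphi$ with $0<\int\varphi<\infty$ and $0<t<\infty$, $s(\varphi,t)$ is the unique $s\ge0$ with $\int H(e^{s\varphi})=1/t$, and $\xi(\varphi,t):=\int\varphi e^{s(\varphi,t)\varphi}$. *)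

From Stdlib Require Import Reals Lra Lia ClassicalEpsilon.
Open Scope R_scope.

Definition H (x : R) : R := x * ln x - x + 1.

(* Lebesgue measure of the ball B(0;r) = {y : ||y|| < r} in R^d for a norm
   whose open unit ball has volume [kappa] (> 0): vol B(0;r) = kappa * r^d.
   For r = 0 this gives 0, consistent with B(0;0) = emptyset (d >= 1). *)
Definition ball_vol (kappa : R) (d : nat) (r : R) : R := kappa * r ^ d.

Definition r_in (beta : R) : R := (1 - beta) / 2.
Definition r_out (beta : R) : R := (1 + beta) / 2.

(* phi_beta = 1 on B(0;r_in), 1/2 on B(0;r_out) \ B(0;r_in), 0 elsewhere.
   Since H(e^{s*0}) = H 1 = 0, the integral of H(e^{s phi_beta}) is: *)
Definition int_H_phi (kappa : R) (d : nat) (beta s : R) : R :=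
  H (exp (s * 1)) * ball_vol kappa d (r_in beta)
  + H (exp (s * (1/2))) * (ball_vol kappa d (r_out beta) - ball_vol kappa d (r_in beta)).

(* Integral of phi_beta * e^{s phi_beta}. *)
Definition int_phi_exp (kappa : R) (d : nat) (beta s : R) : R :=
  1 * exp (s * 1) * ball_vol kappa d (r_in beta)
  + (1/2) * exp (s * (1/2)) * (ball_vol kappa d (r_out beta) - ball_vol kappa d (r_in beta)).

(* s(phi_beta, t): the (unique) s >= 0 with int H(e^{s phi_beta}) = 1/t. *)
Definition s_phi (kappa : R) (d : nat) (t beta : R) : R :=
  epsilon (inhabits 0) (fun s => 0 <= s /\ int_H_phi kappa d beta s = / t).

Definition mu (kappa : R) (d : nat) (t beta : R) : R :=
  int_phi_exp kappa d beta (s_phi kappa d t beta).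

(* Put Λ_β(r) = ∫ (e^{r φ_β} - 1). It is convex with Λ_β' = ∫ φ_β e^{r φ_β}, and
   ∫ H(e^{r φ_β}) = r Λ_β'(r) - Λ_β(r); hence the constraint defining s_β = s(φ_β,t) gives
   μ(β) = (1/t + Λ_β(s_β)) / s_β = min_{r>0} (1/t + Λ_β(r)) / r.  So μ(β) ≤ μ(γ) as soon as
   Λ_β(s_γ) ≤ Λ_γ(s_γ).  With v = e^{r/2}, Λ_β(r) = κ 2^{-d} (v-1) ((1-β)^d v + (1+β)^d), and it
   remains to check that this holds for γ = 0 or for γ = 1.  The numbers v_γ = e^{s_γ/2} are
   tied by H(v_0^2) = 2^d H(v_1), and an elementary case analysis on v_0, v_1 and β finishes. *)
From Stdlib Require Import Reals Lra Lia ClassicalEpsilon.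
Open Scope R_scope.

Lemma ln_le x y : 0 < x -> x <= y -> ln x <= ln y.
Proof.
  intros Hx Hxy; destruct (Req_dec x y) as [<-|Hne]; [lra|].
  left; apply ln_increasing; lra.
Qed.

Lemma ln_le_sub1 x : 0 < x -> ln x <= x - 1.
Proof. intro Hx; pose proof (exp_ineq1_le (ln x)); rewrite exp_ln in *; lra. Qed.

Lemma ln_ge_1_sub_inv x : 0 < x -> 1 - / x <= ln x.
Proof.
  intro Hx; pose proof (ln_le_sub1 (/ x) (Rinv_0_lt_compat _ Hx)).
  rewrite ln_Rinv in *; lra.
Qed.

Lemma ln2_ge : 0.6 <= ln 2.
Proof.
  assert (E : exp 0.6 = exp 0.2 * exp 0.2 * exp 0.2) by (rewrite <- !exp_plus; f_equal; lra).
  assert (Einv : exp 0.2 * exp (-0.2) = 1).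
  { rewrite <- exp_plus, <- exp_0; f_equal; lra. }
  pose proof (exp_ineq1_le (-0.2)); pose proof (exp_pos 0.2).
  assert (exp 0.2 <= 1.25) by nra.
  assert (exp 0.6 <= 2) by (rewrite E; nra).
  rewrite <- (ln_exp 0.6); apply ln_le; [apply exp_pos | lra].
Qed.

Lemma ln3_ge : 1 <= ln 3.
Proof. rewrite <- (ln_exp 1); apply ln_le; [apply exp_pos | apply exp_le_3]. Qed.

Lemma H_exp u : H (exp u) = exp u * u - exp u + 1.
Proof. unfold H; rewrite ln_exp; ring. Qed.

(* Convexity of H: its tangent at y has slope H'(y) = ln y. *)
Lemma H_tangent y z : 0 < y -> 0 < z -> (z - y) * ln y <= H z - H y.
Proof.
  intros Hy Hz; unfold H.
  assert (Hzy : 0 < z / y) by (apply Rdiv_lt_0_compat; lra).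
  replace (ln z) with (ln y + ln (z / y))
    by (rewrite <- ln_mult by lra; f_equal; field; lra).
  pose proof (ln_ge_1_sub_inv _ Hzy) as Hl.
  replace (/ (z / y)) with (y / z) in Hl by (field; lra).
  assert (z * (1 - y / z) = z - y) by (field; lra).
  nra.
Qed.

Lemma H_le_H y z : 1 <= y -> y <= z -> H y <= H z.
Proof.
  intros Hy Hyz; pose proof (H_tangent y z ltac:(lra) ltac:(lra)).
  assert (0 <= ln y) by (rewrite <- ln_1; apply ln_le; lra); nra.
Qed.

Lemma H_lt_H y z : 1 < y -> y < z -> H y < H z.
Proof.
  intros Hy Hyz; pose proof (H_tangent y z ltac:(lra) ltac:(lra)).
  assert (0 < ln y) by (rewrite <- ln_1; apply ln_increasing; lra); nra.
Qed.

Lemma sq_le_H_exp u : 1 <= u -> u * u <= H (exp u).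
Proof. intro Hu; rewrite H_exp; pose proof (exp_ineq1_le u); nra. Qed.

Lemma H_sq_quarter_le N : 4 <= N -> H (N * N / 4) <= N * H (N - 1).
Proof.
  intro HN; unfold H.
  replace (ln (N * N / 4)) with (2 * ln N - 2 * ln 2).
  2: { replace (N * N / 4) with (N * N * / (2 * 2)) by field.
       rewrite !ln_mult, ln_Rinv, ln_mult by (try apply Rmult_lt_0_compat; lra); ring. }
  assert (Hl : ln (N - 1) - ln N >= - / (N - 1)).
  { replace (ln (N - 1)) with (ln N + ln ((N - 1) / N))
      by (rewrite <- ln_mult by (try apply Rdiv_lt_0_compat; lra); f_equal; field; lra).
    pose proof (ln_ge_1_sub_inv ((N - 1) / N) ltac:(apply Rdiv_lt_0_compat; lra)).
    replace (/ ((N - 1) / N)) with (1 + / (N - 1)) in * by (field; lra); lra. }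
  assert (N * (N - 1) * ln (N - 1) >= N * (N - 1) * ln N - N).
  { assert (N * (N - 1) * - / (N - 1) = - N) by (field; lra).
    assert (0 <= N * (N - 1)) by nra; nra. }
  assert (HlN : 2 * ln 2 <= ln N).
  { replace (2 * ln 2) with (ln (2 * 2)) by (rewrite ln_mult; lra); apply ln_le; lra. }
  pose proof ln2_ge.
  assert ((N * N / 2 - N) * (2 * ln 2) <= (N * N / 2 - N) * ln N)
    by (apply Rmult_le_compat_l; nra).
  assert (N * N * 0.6 <= N * N * ln 2) by (apply Rmult_le_compat_l; nra).
  nra.
Qed.

Lemma H_sq_pred_le N : 4 <= N -> H ((N - 1) * (N - 1)) <= N * H (N * (N - 1) / 2).
Proof.
  intro HN; unfold H.
  rewrite ln_mult by lra.
  replace (ln (N * (N - 1) / 2)) with (ln N + ln (N - 1) - ln 2)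
    by (unfold Rdiv; rewrite !ln_mult, ln_Rinv
          by (try apply Rmult_lt_0_compat; try apply Rinv_0_lt_compat; lra); ring).
  assert (2 * ln 2 <= ln N).
  { replace (2 * ln 2) with (ln (2 * 2)) by (rewrite ln_mult; lra); apply ln_le; lra. }
  assert (1 <= ln (N - 1)) by (eapply Rle_trans; [apply ln3_ge | apply ln_le; lra]).
  pose proof ln_lt_2.
  set (l := ln N) in *; set (L := ln (N - 1)) in *; set (l2 := ln 2) in *.
  assert (0 <= N * N * (N - 1) / 2) by (assert (0 <= N * N) by nra; nra).
  assert (N * N * (N - 1) / 2 * (l2 - 1) <= N * N * (N - 1) / 2 * (l - l2 - 1))
    by (apply Rmult_le_compat_l; lra).
  assert (0 <= (N - 1) * (N - 2) * (N - 2) / 2) by (assert (0 <= (N - 2) * (N - 2)) by nra; nra).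
  assert ((N - 1) * (N - 2) * (N - 2) / 2 * 1 <= (N - 1) * (N - 2) * (N - 2) / 2 * L)
    by (apply Rmult_le_compat_l; lra).
  assert (N * N * (N - 1) / 2 * / 2 <= N * N * (N - 1) / 2 * l2)
    by (apply Rmult_le_compat_l; lra).
  nra.
Qed.

(** * Step functions with values 1 and 1/2 *)

(* For φ equal to 1 on a set of measure [a], to 1/2 on a set of measure [b] and to 0 elsewhere,
   these are ∫ H(e^{sφ}), ∫ φ e^{sφ} and ∫ (e^{sφ} - 1). *)
Definition step_H (a b s : R) : R := a * H (exp s) + b * H (exp (s / 2)).
Definition step_xi (a b s : R) : R := a * exp s + b / 2 * exp (s / 2).
Definition step_Lambda (a b s : R) : R := a * (exp s - 1) + b * (exp (s / 2) - 1).

Lemma exp_half s : exp s = exp (s / 2) * exp (s / 2).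
Proof. rewrite <- exp_plus; f_equal; field. Qed.

Lemma exp_tangent s r : exp s * (1 + (r - s)) <= exp r.
Proof.
  replace (exp r) with (exp s * exp (r - s)) by (rewrite <- exp_plus; f_equal; ring).
  apply Rmult_le_compat_l; [left; apply exp_pos | apply exp_ineq1_le].
Qed.

Lemma step_H_eq a b s : step_H a b s = s * step_xi a b s - step_Lambda a b s.
Proof. unfold step_H, step_xi, step_Lambda; rewrite !H_exp; field. Qed.

Lemma step_Lambda_tangent a b s r : 0 <= a -> 0 <= b ->
  (r - s) * step_xi a b s <= step_Lambda a b r - step_Lambda a b s.
Proof.
  intros Ha Hb; unfold step_xi, step_Lambda.
  pose proof (exp_tangent s r); pose proof (exp_tangent (s / 2) (r / 2)).
  assert (a * (exp s * (1 + (r - s))) <= a * exp r) by (apply Rmult_le_compat_l; lra).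
  assert (b * (exp (s / 2) * (1 + (r / 2 - s / 2))) <= b * exp (r / 2))
    by (apply Rmult_le_compat_l; lra).
  nra.
Qed.

Lemma step_xi_eq a b s C : 0 < s -> step_H a b s = C ->
  step_xi a b s = (C + step_Lambda a b s) / s.
Proof. intros Hs <-; rewrite step_H_eq; field; lra. Qed.

Lemma step_xi_le a b s r C : 0 <= a -> 0 <= b -> 0 < r -> step_H a b s = C ->
  step_xi a b s <= (C + step_Lambda a b r) / r.
Proof.
  intros Ha Hb Hr <-; rewrite step_H_eq.
  pose proof (step_Lambda_tangent a b s r Ha Hb).
  apply Rmult_le_reg_r with r; [lra|].
  unfold Rdiv; rewrite Rmult_assoc, Rinv_l by lra; lra.
Qed.

Lemma step_H_0 a b : step_H a b 0 = 0.
Proof.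
  unfold step_H; replace (0 / 2) with 0 by field.
  rewrite exp_0; unfold H; rewrite ln_1; ring.
Qed.

Lemma step_H_root a b C : 0 <= a -> 0 <= b -> 0 < a + b -> 0 < C ->
  exists s, 0 <= s /\ step_H a b s = C.
Proof.
  intros Ha Hb Hab HC.
  set (S := 2 + 4 * C / (a + b)).
  assert (HS : 4 * C / (a + b) > 0) by (apply Rdiv_lt_0_compat; lra).
  assert (HS' : (a + b) * (4 * C / (a + b)) = 4 * C) by (field; lra).
  set (f := fun s => a * (exp s * s - exp s + 1)
                     + b * (exp (s / 2) * (s / 2) - exp (s / 2) + 1) - C).
  assert (Ef : forall s, f s = step_H a b s - C)
    by (intro s; unfold f, step_H; rewrite !H_exp; ring).
  assert (f0 : f 0 < 0) by (rewrite Ef, step_H_0; lra).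
  assert (fS : 0 < f S).
  { rewrite Ef; unfold step_H.
    assert (Ha' : a * (S * S) <= a * H (exp S))
      by (apply Rmult_le_compat_l, sq_le_H_exp; unfold S; lra).
    assert (Hb' : b * (S / 2 * (S / 2)) <= b * H (exp (S / 2)))
      by (apply Rmult_le_compat_l, sq_le_H_exp; unfold S; lra).
    assert (S / 2 * (S / 2) >= S / 2) by (unfold S; nra).
    assert (S * S >= S / 2) by (unfold S; nra).
    assert ((a + b) * (S / 2) > 2 * C) by (unfold S; nra).
    nra. }
  assert (cf : continuity f) by (unfold f; reg).
  destruct (IVT f 0 S cf ltac:(unfold S; lra) f0 fS) as [s [Hs Hfs]].
  exists s; split; [lra | rewrite Ef in Hfs; lra].
Qed.

Lemma pow_le_pow_of_le1 x m n : 0 <= x <= 1 -> (m <= n)%nat -> x ^ n <= x ^ m.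
Proof.
  intros Hx Hmn; induction Hmn as [|n _ IH]; [lra|].
  simpl; assert (0 <= x ^ n) by (apply pow_le; lra); nra.
Qed.

Lemma pow_le_self x n : 0 <= x <= 1 -> (1 <= n)%nat -> x ^ n <= x.
Proof. intros Hx Hn; rewrite <- (pow_1 x) at 2; apply pow_le_pow_of_le1; assumption. Qed.

(* The chord of the convex map b |-> (1+b)^d over [0, c]. *)
Lemma pow_1plus_le_chord c b d : 0 <= b <= c ->
  c * (1 + b) ^ d <= c + b * ((1 + c) ^ d - 1).
Proof.
  intros Hb; induction d as [|d IH]; simpl; [lra|].
  assert (1 <= (1 + c) ^ d) by (apply pow_R1_Rle; lra).
  assert ((1 + b) * (c * (1 + b) ^ d) <= (1 + b) * (c + b * ((1 + c) ^ d - 1)))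
    by (apply Rmult_le_compat_l; lra).
  assert (0 <= ((1 + c) ^ d - 1) * (b * (c - b))) by (apply Rmult_le_pos; nra).
  nra.
Qed.

Lemma three_halves_pow_le d : (2 <= d)%nat -> 4 / 3 * ((3 / 2) ^ d - 1) <= 2 ^ d / 2.
Proof.
  intros Hd; induction Hd as [|d Hd IH]; simpl in *; [lra|].
  assert (4 <= 2 ^ d) by (replace 4 with (2 ^ 2) by (simpl; lra); apply Rle_pow; lia || lra).
  lra.
Qed.

(** * The comparison between v_0 and v_1 *)

Definition profile (d : nat) (beta v : R) : R := (1 - beta) ^ d * v + (1 + beta) ^ d.

Lemma profile_0 d v : profile d 0 v = v + 1.
Proof. unfold profile; rewrite Rminus_0_r, Rplus_0_r, pow1; ring. Qed.

Lemma profile_1 d v : (0 < d)%nat -> profile d 1 v = 2 ^ d.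
Proof.
  intro Hd; unfold profile; rewrite Rminus_diag, pow_i by lia.
  replace (1 + 1) with 2 by ring; ring.
Qed.

Lemma profile_le_at0_large d b v : (1 <= d)%nat -> 0 <= b <= 1 -> 2 ^ d - 1 <= v ->
  profile d b v <= profile d 0 v.
Proof.
  intros Hd Hb Hv; rewrite profile_0; unfold profile.
  assert (Hin : (1 - b) ^ d <= 1 - b) by (apply pow_le_self; lra || lia).
  pose proof (pow_1plus_le_chord 1 b d ltac:(lra)) as Hout.
  assert (1 <= 2 ^ d) by (apply pow_R1_Rle; lra).
  assert ((1 - b) ^ d * v <= (1 - b) * v) by (apply Rmult_le_compat_r; lra).
  assert (0 <= (v - (2 ^ d - 1)) * b) by (apply Rmult_le_pos; lra).
  replace (1 + 1) with 2 in Hout by ring; lra.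
Qed.

Lemma profile_le_at1_small d b v : (1 <= d)%nat -> 0 <= b <= 1 -> 0 <= v <= 2 ^ d - 1 ->
  profile d b v <= profile d 1 v.
Proof.
  intros Hd Hb Hv; rewrite profile_1 by lia; unfold profile.
  assert (Hin : (1 - b) ^ d <= 1 - b) by (apply pow_le_self; lra || lia).
  pose proof (pow_1plus_le_chord 1 b d ltac:(lra)) as Hout.
  assert ((1 - b) ^ d * v <= (1 - b) * (2 ^ d - 1)).
  { apply Rle_trans with ((1 - b) * v);
      [apply Rmult_le_compat_r | apply Rmult_le_compat_l]; lra. }
  replace (1 + 1) with 2 in Hout by ring; lra.
Qed.

Lemma profile_le_at0_small_beta d b v : (2 <= d)%nat -> 0 <= b <= 1 / 2 -> 2 ^ d / 2 <= v ->
  profile d b v <= profile d 0 v.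
Proof.
  intros Hd Hb Hv; rewrite profile_0; unfold profile.
  assert (Hin : (1 - b) ^ d <= (1 - b) ^ 2) by (apply pow_le_pow_of_le1; lra || lia).
  pose proof (pow_1plus_le_chord (1 / 2) b d ltac:(lra)) as Hout.
  pose proof (three_halves_pow_le d Hd).
  replace (1 + 1 / 2) with (3 / 2) in Hout by field.
  assert (0 < 2 ^ d) by (apply pow_lt; lra).
  assert (1.5 * b * v <= (1 - (1 - b) ^ d) * v) by (apply Rmult_le_compat_r; simpl in Hin; nra).
  nra.
Qed.

Lemma profile_le_at1_large_beta d b v : (1 <= d)%nat -> 1 / 2 <= b <= 1 ->
  0 <= v <= 2 ^ d * (2 ^ d - 1) / 2 -> profile d b v <= profile d 1 v.
Proof.
  intros Hd Hb Hv; rewrite profile_1 by lia; unfold profile.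
  assert (HN : 0 < 2 ^ d) by (apply pow_lt; lra).
  assert (Hin : (1 - b) ^ d * 2 ^ d <= 2 * (1 - b)).
  { rewrite Rmult_comm, <- Rpow_mult_distr; apply pow_le_self; lra || lia. }
  pose proof (pow_1plus_le_chord 1 b d ltac:(lra)) as Hout.
  replace (1 + 1) with 2 in Hout by ring.
  assert ((1 - b) ^ d * v * 2 ^ d <= 2 * (1 - b) * (2 ^ d * (2 ^ d - 1) / 2)).
  { replace ((1 - b) ^ d * v * 2 ^ d) with ((1 - b) ^ d * 2 ^ d * v) by ring.
    apply Rmult_le_compat; try lra; apply Rmult_le_pos; try lra; apply pow_le; lra. }
  assert ((1 - b) ^ d * v <= (1 - b) * (2 ^ d - 1)) by (apply Rmult_le_reg_r with (2 ^ d); nra).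
  lra.
Qed.

Lemma balance_lower N v0 v1 : 4 <= N -> 1 < v0 -> N - 1 <= v1 ->
  H (v0 * v0) = N * H v1 -> N / 2 <= v0.
Proof.
  intros HN Hv0 Hv1 E; apply Rnot_lt_le; intro Hlt.
  assert (K1 : H (v0 * v0) < H (N * N / 4)) by (apply H_lt_H; nra).
  pose proof (H_sq_quarter_le N HN) as K2.
  assert (K3 : H (N - 1) <= H v1) by (apply H_le_H; lra).
  nra.
Qed.

Lemma balance_upper N v0 v1 : 4 <= N -> 1 < v0 <= N - 1 -> 1 < v1 ->
  H (v0 * v0) = N * H v1 -> v1 <= N * (N - 1) / 2.
Proof.
  intros HN Hv0 Hv1 E; apply Rnot_lt_le; intro Hlt.
  assert (K1 : H (v0 * v0) <= H ((N - 1) * (N - 1))) by (apply H_le_H; nra).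
  pose proof (H_sq_pred_le N HN) as K2.
  assert (K3 : H (N * (N - 1) / 2) < H v1) by (apply H_lt_H; nra).
  nra.
Qed.

Lemma profile_le_at_endpoint d b v0 v1 : (1 <= d)%nat -> 0 <= b <= 1 -> 1 < v0 -> 1 < v1 ->
  H (v0 * v0) = 2 ^ d * H v1 ->
  profile d b v0 <= profile d 0 v0 \/ profile d b v1 <= profile d 1 v1.
Proof.
  intros Hd Hb Hv0 Hv1 E.
  destruct (Rle_lt_dec (2 ^ d - 1) v0) as [Hlarge|Hsmall];
    [left; apply profile_le_at0_large; lra || lia|].
  destruct (Rle_lt_dec v1 (2 ^ d - 1)) as [Hv1small|Hv1large];
    [right; apply profile_le_at1_small; lra || lia|].
  assert (Hd2 : (2 <= d)%nat) by (destruct d as [|[|d]]; simpl in Hsmall; lra || lia).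
  assert (HN : 4 <= 2 ^ d)
    by (replace 4 with (2 ^ 2) by (simpl; lra); apply Rle_pow; lra || lia).
  destruct (Rle_lt_dec b (1 / 2)).
  - left; apply profile_le_at0_small_beta; [lia | lra |].
    apply (balance_lower _ v0 v1); lra.
  - right; apply profile_le_at1_large_beta; [lia | lra |].
    split; [lra | apply (balance_upper _ v0 v1); lra].
Qed.

Section Phi.
Variables (kappa t : R) (d : nat).
Hypotheses (Hkappa : 0 < kappa) (Ht : 0 < t) (Hd : (0 < d)%nat).

Let vin (beta : R) : R := ball_vol kappa d (r_in beta).
Let vann (beta : R) : R := ball_vol kappa d (r_out beta) - ball_vol kappa d (r_in beta).

Lemma ball_vol_half u : ball_vol kappa d (u / 2) = kappa * u ^ d / 2 ^ d.
Proof. unfold ball_vol, Rdiv; rewrite Rpow_mult_distr, pow_inv; ring. Qed.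

Lemma int_H_phi_step beta s : int_H_phi kappa d beta s = step_H (vin beta) (vann beta) s.
Proof.
  unfold int_H_phi, step_H, vin, vann.
  replace (s * 1) with s by ring; replace (s * (1 / 2)) with (s / 2) by field; ring.
Qed.

Lemma int_phi_exp_step beta s : int_phi_exp kappa d beta s = step_xi (vin beta) (vann beta) s.
Proof.
  unfold int_phi_exp, step_xi, vin, vann.
  replace (s * 1) with s by ring; replace (s * (1 / 2)) with (s / 2) by field; field.
Qed.

Lemma step_Lambda_phi beta r : step_Lambda (vin beta) (vann beta) r =
  kappa / 2 ^ d * (exp (r / 2) - 1) * profile d beta (exp (r / 2)).
Proof.
  assert (0 < 2 ^ d) by (apply pow_lt; lra).
  unfold step_Lambda, vin, vann, profile, r_in, r_out; rewrite !ball_vol_half, (exp_half r).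
  field; lra.
Qed.

Lemma vol_phi_nonneg beta : 0 <= beta <= 1 ->
  0 <= vin beta /\ 0 <= vann beta /\ 0 < vin beta + vann beta.
Proof.
  intro Hb; unfold vin, vann, r_in, r_out; rewrite !ball_vol_half.
  assert (Hc : 0 < kappa / 2 ^ d) by (apply Rdiv_lt_0_compat; [|apply pow_lt]; lra).
  assert (0 <= (1 - beta) ^ d) by (apply pow_le; lra).
  assert ((1 - beta) ^ d <= (1 + beta) ^ d) by (apply pow_incr; lra).
  assert (0 < (1 + beta) ^ d) by (apply pow_lt; lra).
  unfold Rdiv in *; repeat split.
  - replace (kappa * (1 - beta) ^ d * / 2 ^ d) with (kappa * / 2 ^ d * (1 - beta) ^ d)
      by ring; nra.
  - replace (kappa * (1 + beta) ^ d * / 2 ^ d - kappa * (1 - beta) ^ d * / 2 ^ d)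
      with (kappa * / 2 ^ d * ((1 + beta) ^ d - (1 - beta) ^ d)) by ring; nra.
  - replace (kappa * (1 - beta) ^ d * / 2 ^ d
             + (kappa * (1 + beta) ^ d * / 2 ^ d - kappa * (1 - beta) ^ d * / 2 ^ d))
      with (kappa * / 2 ^ d * (1 + beta) ^ d) by ring; nra.
Qed.

Lemma s_phi_spec beta : 0 <= beta <= 1 ->
  0 < s_phi kappa d t beta /\ int_H_phi kappa d beta (s_phi kappa d t beta) = / t.
Proof.
  intro Hb; destruct (vol_phi_nonneg beta Hb) as (Ha & Hb' & Hab).
  assert (Hinv : 0 < / t) by (apply Rinv_0_lt_compat; lra).
  assert (Hspec : 0 <= s_phi kappa d t beta
                  /\ int_H_phi kappa d beta (s_phi kappa d t beta) = / t).
  { unfold s_phi; apply epsilon_spec.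
    setoid_rewrite int_H_phi_step; apply step_H_root; assumption. }
  destruct Hspec as [Hs Hint].
  split; [|exact Hint].
  destruct Hs as [Hs|Hs0]; [exact Hs|].
  rewrite <- Hs0, int_H_phi_step, step_H_0 in Hint; lra.
Qed.

Lemma mu_le_mu beta gamma : 0 <= beta <= 1 -> 0 <= gamma <= 1 ->
  let v := exp (s_phi kappa d t gamma / 2) in
  profile d beta v <= profile d gamma v -> mu kappa d t beta <= mu kappa d t gamma.
Proof.
  intros Hb Hg v Hprof.
  destruct (s_phi_spec beta Hb) as [_ Eb].
  destruct (s_phi_spec gamma Hg) as [Hsg Eg].
  destruct (vol_phi_nonneg beta Hb) as (Ha & Hb' & _).
  rewrite int_H_phi_step in Eb, Eg.
  unfold mu; rewrite !int_phi_exp_step.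
  rewrite (step_xi_eq _ _ _ _ Hsg Eg).
  eapply Rle_trans; [apply (step_xi_le _ _ _ _ _ Ha Hb' Hsg Eb)|].
  apply Rmult_le_compat_r; [left; apply Rinv_0_lt_compat; lra|].
  rewrite !step_Lambda_phi; fold v.
  assert (0 < 2 ^ d) by (apply pow_lt; lra).
  assert (1 < v) by (unfold v; pose proof (exp_ineq1 (s_phi kappa d t gamma / 2)); lra).
  assert (0 <= kappa / 2 ^ d * (v - 1))
    by (apply Rmult_le_pos; [left; apply Rdiv_lt_0_compat|]; lra).
  apply Rplus_le_compat_l, Rmult_le_compat_l; assumption.
Qed.

Lemma s_phi_balance :
  H (exp (s_phi kappa d t 0 / 2) * exp (s_phi kappa d t 0 / 2))
  = 2 ^ d * H (exp (s_phi kappa d t 1 / 2)).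
Proof.
  destruct (s_phi_spec 0 ltac:(lra)) as [_ E0].
  destruct (s_phi_spec 1 ltac:(lra)) as [_ E1].
  rewrite int_H_phi_step in E0, E1; unfold step_H, vin, vann, r_in, r_out in E0, E1.
  rewrite !ball_vol_half in E0, E1.
  rewrite Rminus_0_r, Rplus_0_r, pow1 in E0; rewrite Rminus_diag, pow_i in E1 by lia.
  set (H0 := H (exp (s_phi kappa d t 0))) in E0.
  set (H1 := H (exp (s_phi kappa d t 1 / 2))) in E1.
  assert (HN : 0 < 2 ^ d) by (apply pow_lt; lra).
  assert (E0' : kappa / 2 ^ d * H0 = / t) by (rewrite <- E0; field; lra).
  assert (E1' : kappa * H1 = / t) by (rewrite <- E1; replace (1 + 1) with 2 by ring; field; lra).
  rewrite <- exp_half; fold H0 H1.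
  apply Rmult_eq_reg_l with (kappa / 2 ^ d); [|apply Rgt_not_eq, Rdiv_lt_0_compat; lra].
  rewrite E0', <- E1'; field; lra.
Qed.

End Phi.

Theorem lemma6p5 (d : nat) (kappa t : R) :
  (0 < d)%nat -> 0 < kappa -> 0 < t ->
  forall beta : R, 0 <= beta <= 1 ->
    mu kappa d t beta <= Rmax (mu kappa d t 0) (mu kappa d t 1).
Proof.
  intros Hd Hkappa Ht beta Hb.
  assert (Hv : forall gamma, 0 <= gamma <= 1 -> 1 < exp (s_phi kappa d t gamma / 2)).
  { intros gamma Hg; destruct (s_phi_spec kappa t d Hkappa Ht gamma Hg) as [Hs _].
    pose proof (exp_ineq1 (s_phi kappa d t gamma / 2)); lra. }
  destruct (profile_le_at_endpoint d beta _ _ ltac:(lia) Hb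
              (Hv 0 ltac:(lra)) (Hv 1 ltac:(lra)) (s_phi_balance kappa t d Hkappa Ht Hd))
    as [Hle | Hle].
  - eapply Rle_trans; [exact (mu_le_mu kappa t d Hkappa Ht beta 0 Hb ltac:(lra) Hle) |].
    apply Rmax_l.
  - eapply Rle_trans; [exact (mu_le_mu kappa t d Hkappa Ht beta 1 Hb ltac:(lra) Hle) |].
    apply Rmax_r.
Qed.
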